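(* The universal $\mathfrak{gl}$-weight system $w_{\mathfrak{gl}}$ satisfies the generalized Vassiliev relations: its $\mathbb{C}$-linear extension to $\bigoplus_m\mathbb{C}[\mathbb{S}_m]$ vanishes on every one-hyper-arc element and every two-hyper-arc element. Equivalently, for every $N\ge1$, the linear extension of $w_{\mathfrak{gl}(N)}$ vanishes on all generalized Vassiliev elements.
   Context: For $N\ge1$, $E_{ij}$ ($1\le i,j\le N$) are the matrix units generating $\mathfrak{gl}(N)$, and for $\alpha\in\mathbb{S}_m$, $w_{\mathfrak{gl}(N)}(\alpha)=\sum_{i_1,\dots,i_m=1}^N E_{i_1i_{\alpha(1)}}E_{i_2i_{\alpha(2)}}\cdots E_{i_mi_{\alpha(m)}}\in ZU(\mathfrak{gl}(N))$ (it is central). Put $C_k^{(N)}=w_{\mathfrak{gl}(N)}((1,2,\dots,k))$. The universal $\mathfrak{gl}$-weight system is the (known to exist, and unique) function $w_{\mathfrak{gl}}:\bigsqcup_{m\ge0}\mathbb{S}_m\to\mathbb{C}[N,C_1,C_2,\dots]$ such that for every $N\ge1$ the specialization $N\mapsto N$, $C_k\mapsto C_k^{(N)}$ sends $w_{\mathfrak{gl}}(\alpha)$ to $w_{\mathfrak{gl}(N)}(\alpha)$; in particular $w_{\mathfrak{gl}}((1,\dots,m))=C_m$. Generalized Vassiliev elements: let $m\ge2$, $\gamma\in\mathbb{S}_{m-1}$, $q\in[m-1]\cup\{*\}$. For $t\in\{0,\dots,m-1\}$ let $\alpha_t\in\mathbb{S}_m$ be obtained by inserting a new point $x$ (free leg)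 into the line $1<\dots<m-1$ in the gap between $t$ and $t+1$, relabeling all points $1,\dots,m$ in order, letting the permutation act as $\gamma$ on old points except $q\mapsto x\mapsto\gamma(q)$ if $q\ne*$, and $x$ fixed if $q=*$. For a cycle $v$ of $\gamma$, $E(\gamma,q,v)=\sum_{j\in v}(\alpha_{j-1}-\alpha_j)$; one-hyper-arc if $q\ne*$, $q\in v$, two-hyper-arc otherwise. *)

From mathcomp Require Import all_boot all_order all_algebra all_fingroup all_field.
Set Implicit Arguments. Unset Strict Implicit. Unset Printing Implicit Defensive.
Import GRing.Theory.
Local Open Scope ring_scope.

(** Words in the generators E_ij (encoded as pairs (i,j) : 'I_N * 'I_N) span
    the free associative algebra T(gl(N)); a formal C-linear combination of
    words is a list of (coefficient, word) pairs, whose value is determined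
    by its coefficient function [coef].  U(gl(N)) = T(gl(N)) / I where I is
    the two-sided ideal generated by
      E_ij E_kl - E_kl E_ij - (delta_jk E_il - delta_li E_kj);
    I is spanned by the elements  a * r * b  with a, b words and r a generator. *)

Definition word (N : nat) := seq ('I_N * 'I_N).
Definition fcomb (N : nat) := seq (algC * word N).

Definition coef N (x : fcomb N) (u : word N) : algC :=
  \sum_(p <- x) (if p.2 == u then p.1 else 0).

Definition scale_comb N (c : algC) (x : fcomb N) : fcomb N :=
  [seq (c * p.1, p.2) | p <- x].

Definition rel_elem N (a b : word N) (i j k l : 'I_N) : fcomb N :=
  [:: (1, a ++ (i, j) :: (k, l) :: b);
      (-1, a ++ (k, l) :: (i, j) :: b);
      (- (j == k)%:R, a ++ (i, l) :: b);
      ((l == i)%:R, a ++ (k, j) :: b)].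

Definition zero_in_Ugl N (x : fcomb N) : Prop :=
  exists s : seq (algC * (word N * word N) * ('I_N * 'I_N * 'I_N * 'I_N)),
    forall u : word N,
      coef x u =
      coef (flatten [seq scale_comb r.1.1
                        (rel_elem r.1.2.1 r.1.2.2 r.2.1.1.1 r.2.1.1.2 r.2.1.2 r.2.2)
                    | r <- s]) u.

(** * The gl(N)-weight system on permutations (points 1..m are 'I_m, 0-based):
    w(alpha) = sum_{i_1..i_m} E_{i_1 i_alpha(1)} ... E_{i_m i_alpha(m)}. *)
Definition wgl N m (alpha : 'S_m) : fcomb N :=
  [seq (1, [seq (i k, i (alpha k)) | k <- enum 'I_m]) | i : {ffun 'I_m -> 'I_N} <- enum {ffun 'I_m -> 'I_N}].

(* C-linear extension: the value on a difference alpha - beta. *)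
Definition wgl_diff N m (alpha beta : 'S_m) : fcomb N :=
  wgl N alpha ++ scale_comb (-1) (wgl N beta).

(** Old points are 'I_n (n = m-1), gamma : 'S_n, q : option 'I_n (None encodes the symbol star).
    For t : 'I_n.+1 (t in {0..n}) the new point x sits at position t of
    'I_n.+1 (i.e. in the gap after t old points), and old point p moves to
    position lift t p (= p if p < t, p+1 otherwise). *)
Definition alpha_fun n (gamma : 'S_n) (q : option 'I_n) (t : 'I_n.+1)
    (y : 'I_n.+1) : 'I_n.+1 :=
  match unlift t y with
  | None =>
      match q with None => t | Some q0 => lift t (gamma q0) end
  | Some p =>
      if q == Some p then t else lift t (gamma p)
  end.

Lemma alpha_fun_inj n gamma q t : injective (@alpha_fun n gamma q t).
Proof.
have H : forall p, (lift t p == t) = false.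
  by move=> p; apply/negbTE; rewrite eq_sym neq_lift.
have H' : forall p, (t == lift t p) = false by move=> p; rewrite eq_sym H.
move=> y1 y2; rewrite /alpha_fun.
case: unliftP => [p1 ->|->]; case: unliftP => [p2 ->|->] //.
- case: q => [q0|]; last by move/lift_inj/perm_inj->.
  case: (eqVneq (Some q0) (Some p1)) => [[<-]|n1];
    case: (eqVneq (Some q0) (Some p2)) => [[<-]|n2] //;
    try by move/eqP; rewrite ?H ?H'.
  by move/lift_inj/perm_inj->.
- case: q => [q0|]; last by move/eqP; rewrite ?H ?H'.
  case: (eqVneq (Some q0) (Some p1)) => [[<-]|n1]; first by move/eqP; rewrite H'.
  by move/lift_inj/perm_inj=> E; rewrite E eqxx in n1.
- case: q => [q0|]; last by move/eqP; rewrite ?H ?H'.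
  case: (eqVneq (Some q0) (Some p2)) => [[<-]|n2]; first by move/eqP; rewrite H.
  by move/lift_inj/perm_inj=> E; rewrite E eqxx in n2.
Qed.

Definition alpha n (gamma : 'S_n) (q : option 'I_n) (t : 'I_n.+1) : 'S_n.+1 :=
  perm (@alpha_fun_inj n gamma q t).

(* E(gamma, q, v) = sum_{j in v} (alpha_{j-1} - alpha_j); in 0-based terms the
   old point p (= j-1) contributes alpha_p - alpha_(p+1). *)
Definition vass_elem N n (gamma : 'S_n) (q : option 'I_n) (v : {set 'I_n}) : fcomb N :=
  flatten [seq wgl_diff N (alpha gamma q (inord p)) (alpha gamma q (inord p.+1))
          | p : 'I_n <- enum v].

From mathcomp Require Import all_boot all_order all_algebra all_fingroup all_field.
From mathcomp Require Import ring.
Set Implicit Arguments. Unset Strict Implicit. Unset Printing Implicit Defensive.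
Import GRing.Theory.
Local Open Scope ring_scope.

(* For an old point p, the permutations alpha_(p-1) and alpha_p differ only
   in the order of the two adjacent points x and p.  In each word of the
   expansion of w_gl(N) the letters E_ij of x and E_kl of p are therefore
   swapped, and by the commutation relation
   w(alpha_(p-1)) - w(alpha_p) = A_p - B_p  in U(gl(N)),
   where A_p collects the words with the fused letter delta_jk E_il and B_p
   those with delta_li E_kj.  A relabelling of the summation indices
   identifies A_(gamma p) with B_p; since a cycle v of gamma is stable under
   gamma, the sum over p in v of A_p - B_p vanishes. *)

Lemma coef_cat N (x y : fcomb N) u : coef (x ++ y) u = coef x u + coef y u.
Proof. by rewrite /coef big_cat. Qed.

Lemma coef_scale_comb N c (x : fcomb N) u : coef (scale_comb c x) u = c * coef x u.
Proof.
rewrite /coef big_map mulr_sumr; apply: eq_bigr => p _ /=.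
by case: ifP; rewrite ?mulr0.
Qed.

Lemma coef_flatten N (xs : seq (fcomb N)) u :
  coef (flatten xs) u = \sum_(x <- xs) coef x u.
Proof. by rewrite /coef big_flatten. Qed.

Lemma coef_rel_elem N (a b : word N) i j k l u :
  coef (rel_elem a b i j k l) u =
    (a ++ (i, j) :: (k, l) :: b == u)%:R - (a ++ (k, l) :: (i, j) :: b == u)%:R
    - (j == k)%:R * (a ++ (i, l) :: b == u)%:R
    + (l == i)%:R * (a ++ (k, j) :: b == u)%:R.
Proof.
rewrite /coef /rel_elem !big_cons big_nil /=.
have ite_mulr (B : bool) (c : algC) : (if B then c else 0) = B%:R * c.
  by case: B; rewrite ?mul1r ?mul0r.
by rewrite !ite_mulr; ring.
Qed.

Lemma coef_wgl N m (a : 'S_m) u :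
  coef (wgl N a) u =
    \sum_(i : {ffun 'I_m -> 'I_N}) ([seq (i k, i (a k)) | k <- enum 'I_m] == u)%:R.
Proof.
rewrite /coef /wgl big_map big_enum /=; apply: eq_bigr => i _.
by case: eqP.
Qed.

Lemma sum_porbit_perm n (g : 'S_n) (v : {set 'I_n}) (R : nmodType) (F : 'I_n -> R) :
  v \in porbits g -> \sum_(p in v) F p = \sum_(p in v) F (g p).
Proof.
case/imsetP => y _ ->; rewrite (reindex_inj (@perm_inj _ g)); apply: eq_bigl => p.
have gp_p := porbit_perm g 1 p; rewrite expg1 in gp_p.
by rewrite -!eq_porbit_mem gp_p.
Qed.

Definition old_points n : seq (option 'I_n) := [seq Some r | r <- enum 'I_n].

Lemma size_old_points n : size (old_points n) = n.
Proof. by rewrite size_map size_enum_ord. Qed.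

Lemma nth_old_points n (p : 'I_n) : nth None (old_points n) p = Some p.
Proof.
rewrite (nth_map p) ?size_enum_ord //; congr Some; apply: val_inj.
by rewrite /= nth_enum_ord.
Qed.

Lemma uniq_old_points n : uniq (old_points n).
Proof. by rewrite map_inj_uniq ?enum_uniq // => a b []. Qed.

Lemma old_points_split n (p : 'I_n) :
  old_points n = take p (old_points n) ++ Some p :: drop p.+1 (old_points n).
Proof.
by rewrite -{1}(cat_take_drop p (old_points n)) (drop_nth None)
  ?size_old_points // nth_old_points.
Qed.

Lemma map_old_points_splice n T (p : 'I_n) (c : T) (f : option 'I_n -> T) :
  map f (take p (old_points n)) ++ c :: map f (drop p.+1 (old_points n)) =
  [seq if z == Some p then c else f z | z <- old_points n].
Proof.
have := uniq_old_points n; rewrite [in X in X -> _](old_points_split p).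
rewrite [in RHS](old_points_split p) map_cat /= eqxx cat_uniq /= => /and4P[_ p_take p_drop _].
congr (_ ++ _ :: _); apply/eq_in_map => z z_in; case: eqP => // z_p; subst z.
  by move: p_take; rewrite negb_or z_in.
by rewrite z_in in p_drop.
Qed.

Lemma map_unlift_enum n (t : 'I_n.+1) :
  [seq unlift t k | k <- enum 'I_n.+1] =
  take t (old_points n) ++ None :: drop t (old_points n).
Proof.
apply: (@inj_map _ _ (omap (@nat_of_ord n))); first by move=> [a|] [b|] //= [] /val_inj ->.
pose G (m : nat) : option nat :=
  if m == t then None else Some (if (m < t)%N then m else m.-1).
have unliftE (k : 'I_n.+1) : omap (@nat_of_ord n) (unlift t k) = G k.
  case: (unliftP t k) => [j ->|->]; rewrite /G ?eqxx //= /bump.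
  case: (leqP t j) => h /=.
    by rewrite add1n (gtn_eqF (h : (t < j.+1)%N)) ltnNge (leqW h).
  by rewrite add0n (ltn_eqF h) h.
have t_le_n : (t <= n)%N by rewrite -ltnS.
rewrite -map_comp (eq_map unliftE) map_cat /= /old_points map_take map_drop -(map_comp _ Some).
have -> : [seq (omap (@nat_of_ord n) \o Some) i | i <- enum 'I_n] = [seq Some i | i <- iota 0 n].
  by rewrite -val_enum_ord -map_comp.
rewrite -map_take -map_drop take_iota drop_iota (minn_idPl t_le_n) add0n.
rewrite (map_comp G val) val_enum_ord.
have -> : iota 0 n.+1 = iota 0 t ++ (t : nat) :: iota t.+1 (n - t).
  by rewrite -[in LHS](subnKC t_le_n) -addnS iotaD.
rewrite map_cat /= /G eqxx; congr (_ ++ _ :: _).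
  apply/eq_in_map => k; rewrite mem_iota add0n => /andP[_ h].
  by rewrite (ltn_eqF h) h.
rewrite (iotaDl 1) -map_comp; apply/eq_in_map => k; rewrite mem_iota => /andP[h _] /=.
by rewrite add1n (gtn_eqF (h : (t < k.+1)%N)) ltnNge (leqW h).
Qed.

Lemma map_unlift_enum_inord n (p : 'I_n) :
  [seq unlift (inord p) k | k <- enum 'I_n.+1] =
  take p (old_points n) ++ None :: Some p :: drop p.+1 (old_points n).
Proof.
rewrite map_unlift_enum inordK; last exact: leqW (ltn_ord p).
by rewrite (drop_nth None) ?size_old_points // nth_old_points.
Qed.

Lemma map_unlift_enum_inordS n (p : 'I_n) :
  [seq unlift (inord p.+1) k | k <- enum 'I_n.+1] =
  take p (old_points n) ++ Some p :: None :: drop p.+1 (old_points n).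
Proof.
rewrite map_unlift_enum inordK; last by rewrite ltnS.
by rewrite (take_nth None) ?size_old_points // nth_old_points cat_rcons.
Qed.

Section ContractedPermutation.
Variables (n : nat) (gamma : 'S_n) (q : option 'I_n).

(* alpha_t read through [unlift t], the new point x being None; it no longer
   depends on t. *)
Definition alpha_opt (z : option 'I_n) : option 'I_n :=
  match z with
  | None => omap gamma q
  | Some r => if q == Some r then None else Some (gamma r)
  end.

Lemma alpha_opt_inj : injective alpha_opt.
Proof.
move=> [r1|] [r2|] //=.
- case: (eqVneq q (Some r1)) => [->|q_r1]; case: (eqVneq (Some r1) (Some r2)) => [->//|r12];
    case: (eqVneq q (Some r2)) => // _.
  by move=> [] /perm_inj ->.
- case: q => [q0|] //=; case: eqP => // /eqP; rewrite eq_sym => q_r [] /perm_inj E.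
  by rewrite E eqxx in q_r.
- case: q => [q0|] //=; case: eqP => // /eqP; rewrite eq_sym => q_r [] /perm_inj E.
  by rewrite E eqxx in q_r.
Qed.

Lemma alpha_opt_Some (p : 'I_n) : q != Some p -> alpha_opt (Some p) = Some (gamma p).
Proof. by move=> /negbTE /= ->. Qed.

Lemma unlift_alpha (t k : 'I_n.+1) :
  unlift t (alpha gamma q t k) = alpha_opt (unlift t k).
Proof.
rewrite /alpha permE /alpha_fun.
case: (unliftP t k) => [p _|_] /=.
  by case: ifP => _; rewrite ?unlift_none ?liftK.
by case: q => [q0|]; rewrite ?unlift_none ?liftK.
Qed.

End ContractedPermutation.

Section MergedWords.
Variables (N n : nat) (gamma : 'S_n) (q : option 'I_n).

Local Notation labelling := {ffun option 'I_n -> 'I_N}.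
Local Notation sigma := (alpha_opt gamma q).

Definition letter (I : labelling) (z : option 'I_n) : 'I_N * 'I_N := (I z, I (sigma z)).

Lemma coef_wgl_alpha (t : 'I_n.+1) u :
  coef (wgl N (alpha gamma q t)) u =
    \sum_(I : labelling)
      ([seq letter I z | z <- [seq unlift t k | k <- enum 'I_n.+1]] == u)%:R.
Proof.
rewrite coef_wgl.
pose lab (I : labelling) : {ffun 'I_n.+1 -> 'I_N} := [ffun k => I (unlift t k)].
pose unlab (i : {ffun 'I_n.+1 -> 'I_N}) : labelling :=
  [ffun z => i (if z is Some r then lift t r else t)].
rewrite (reindex lab) /=; last first.
  apply: onW_bij; exists unlab => [I|i]; apply/ffunP.
    by case=> [r|]; rewrite !ffunE /= ?liftK ?unlift_none.
  move=> k; rewrite !ffunE.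
  by case: (unliftP t k) => [p ->|->] /=; rewrite ?liftK ?unlift_none.
apply: eq_bigr => I _; congr (_ %:R); congr (_ == u).
by rewrite -map_comp; apply: eq_map => k /=; rewrite !ffunE unlift_alpha.
Qed.

Definition merged_word (I : labelling) (p : 'I_n) (c : 'I_N * 'I_N) : word N :=
  [seq if z == Some p then c else letter I z | z <- old_points n].

(* The terms A_p and B_p of the commutation relation, as functions of the
   labelling of the points. *)
Definition merge_xp (u : word N) (p : 'I_n) (I : labelling) : algC :=
  (I (sigma None) == I (Some p))%:R *
  (merged_word I p (I None, I (sigma (Some p))) == u)%:R.

Definition merge_px (u : word N) (p : 'I_n) (I : labelling) : algC :=
  (I (sigma (Some p)) == I None)%:R *
  (merged_word I p (I (Some p), I (sigma None)) == u)%:R.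

Definition ideal_gen (r : algC * (word N * word N) * ('I_N * 'I_N * 'I_N * 'I_N)) :=
  scale_comb r.1.1 (rel_elem r.1.2.1 r.1.2.2 r.2.1.1.1 r.2.1.1.2 r.2.1.2 r.2.2).

Definition commute_xp (p : 'I_n) (I : labelling) :=
  (1 : algC, (map (letter I) (take p (old_points n)), map (letter I) (drop p.+1 (old_points n))),
   (I None, I (sigma None), I (Some p), I (sigma (Some p)))).

Lemma sum_coef_commute_xp (p : 'I_n) u :
  \sum_(I <- enum labelling) coef (ideal_gen (commute_xp p I)) u =
    coef (wgl N (alpha gamma q (inord p))) u - coef (wgl N (alpha gamma q (inord p.+1))) u
    - \sum_I merge_xp u p I + \sum_I merge_px u p I.
Proof.
rewrite big_enum !coef_wgl_alpha map_unlift_enum_inord map_unlift_enum_inordS.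
rewrite -!sumrB -big_split; apply: eq_bigr => I _.
by rewrite coef_scale_comb mul1r coef_rel_elem /merge_xp /merge_px /merged_word
  -!map_old_points_splice !map_cat.
Qed.

End MergedWords.

(* Here p is sent to x and x to gamma p, so exchanging the labels of x and
   gamma p matches the two sums term by term. *)
Lemma sum_merge_xp_perm_q N n (gamma : 'S_n) (p : 'I_n) (u : word N) :
  \sum_I merge_xp gamma (Some p) u (gamma p) I = \sum_I merge_px gamma (Some p) u p I.
Proof.
pose swap (I : {ffun option 'I_n -> 'I_N}) : {ffun option 'I_n -> 'I_N} :=
  [ffun z => I (tperm None (Some (gamma p)) z)].
have swapK : involutive swap by move=> I; apply/ffunP => z; rewrite !ffunE tpermK.
rewrite [RHS](reindex_inj (inv_inj swapK)); apply: eq_bigr => I _.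
rewrite /merge_xp /merge_px /merged_word /alpha_opt /= !ffunE !eqxx.
congr (_ * (_ == u)%:R); apply/eq_in_map => _ /mapP [r _ ->].
rewrite /letter /alpha_opt /= !ffunE.
case: (eqVneq r p) => [->{r}|r_p].
  case: (eqVneq p (gamma p)) => [fix_p|p_gp]; first by rewrite -fix_p !eqxx tpermR.
  by rewrite (inj_eq (@Some_inj _)) (negbTE p_gp) !eqxx tpermR tpermD // (inj_eq (@Some_inj _)) eq_sym.
have gp_gr : Some (gamma p) != Some (gamma r).
  by rewrite (inj_eq (@Some_inj _)) (inj_eq (@perm_inj _ gamma)) eq_sym.
rewrite !(inj_eq (@Some_inj _)) (negbTE r_p) (eq_sym p r) (negbTE r_p) [X in _ = (_, I X)]tpermD //.
case: (eqVneq r (gamma p)) => [r_gp|r_gp]; last by rewrite tpermD // (inj_eq (@Some_inj _)) eq_sym.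
by rewrite r_gp tpermR; rewrite r_gp in r_p; rewrite eq_sym (negbTE r_p).
Qed.

(* On the support of [merge_xp (gamma p)], moving the label of x onto the
   point gamma p gives a bijection onto the support of [merge_px p]. *)
Lemma sum_merge_xp_perm N n (gamma : 'S_n) q (p : 'I_n) (u : word N) :
  q != Some p ->
  \sum_I merge_xp gamma q u (gamma p) I = \sum_I merge_px gamma q u p I.
Proof.
move=> q_p; have sigma_p := alpha_opt_Some gamma q_p.
have sigma_x_gp : (alpha_opt gamma q None == Some (gamma p)) = false.
  by rewrite -sigma_p (inj_eq (@alpha_opt_inj _ gamma q)).
pose relabel (I : {ffun option 'I_n -> 'I_N}) : {ffun option 'I_n -> 'I_N} :=
  [ffun z => if z == Some (gamma p) then I None else I z].
pose supp_xp :=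
  [set I : {ffun option 'I_n -> 'I_N} | I (alpha_opt gamma q None) == I (Some (gamma p))].
pose supp_px := [set J : {ffun option 'I_n -> 'I_N} | J (Some (gamma p)) == J None].
pose word_px J : algC :=
  (merged_word gamma q J p (J (Some p), J (alpha_opt gamma q None)) == u)%:R.
have merge_xpE : \sum_I merge_xp gamma q u (gamma p) I =
    \sum_(I in supp_xp) word_px (relabel I).
  rewrite [RHS]big_mkcond; apply: eq_bigr => I _; rewrite inE /merge_xp.
  case: eqP => I_xp; last by rewrite mul0r.
  rewrite mul1r /word_px /merged_word; congr (_ == u)%:R.
  apply/eq_in_map => _ /mapP [r _ ->]; rewrite /letter !ffunE sigma_x_gp.
  case: (eqVneq r p) => [->{r}|r_p].
    rewrite eqxx I_xp sigma_p; case: (eqVneq p (gamma p)) => [fix_p|p_gp].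
      by rewrite -fix_p eqxx sigma_p -fix_p.
    by rewrite !(inj_eq (@Some_inj _)) (negbTE p_gp).
  rewrite !(inj_eq (@Some_inj _)) (negbTE r_p).
  have -> : (alpha_opt gamma q (Some r) == Some (gamma p)) = (r == p).
    by rewrite -sigma_p (inj_eq (@alpha_opt_inj _ gamma q)) (inj_eq (@Some_inj _)).
  by rewrite (negbTE r_p); case: (eqVneq r (gamma p)) => [->|]; rewrite ?eqxx.
have relabel_inj : {in supp_xp &, injective relabel}.
  move=> I1 I2; rewrite !inE => /eqP I1_xp /eqP I2_xp I12; apply/ffunP => z.
  have I12z z' := congr1 (fun f : {ffun option 'I_n -> 'I_N} => f z') I12.
  case: (eqVneq z (Some (gamma p))) => [->|z_gp].
    rewrite -I1_xp -I2_xp.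
    by move: (I12z (alpha_opt gamma q None)); rewrite !ffunE sigma_x_gp.
  by move: (I12z z); rewrite !ffunE (negbTE z_gp).
have relabel_onto : relabel @: supp_xp = supp_px.
  apply/setP => J; rewrite inE; apply/imsetP/eqP => [[I _ ->]|J_px].
    by rewrite !ffunE eqxx.
  exists [ffun z => if z == Some (gamma p) then J (alpha_opt gamma q None) else J z].
    by rewrite inE !ffunE sigma_x_gp eqxx.
  by apply/ffunP => z; rewrite !ffunE; case: eqP => [->|//]; rewrite J_px.
rewrite merge_xpE -(big_imset _ relabel_inj) /= relabel_onto big_mkcond.
apply: eq_bigr => J _; rewrite inE /merge_px sigma_p.
by case: eqP; rewrite ?mul1r ?mul0r.
Qed.

Lemma sum_merge_xp_porbit N n (gamma : 'S_n) q (v : {set 'I_n}) (u : word N) :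
  v \in porbits gamma ->
  \sum_(p in v) \sum_I merge_xp gamma q u p I = \sum_(p in v) \sum_I merge_px gamma q u p I.
Proof.
move=> v_orbit; rewrite (sum_porbit_perm _ v_orbit); apply: eq_bigr => p _.
case: (eqVneq q (Some p)) => [->|q_p]; first exact: sum_merge_xp_perm_q.
exact: sum_merge_xp_perm.
Qed.

Theorem theorem3 (N : nat) (hN : (0 < N)%N) (n : nat) (hn : (0 < n)%N)
    (gamma : 'S_n) (q : option 'I_n) (v : {set 'I_n}) :
  v \in porbits gamma -> zero_in_Ugl (vass_elem N gamma q v).
Proof.
move=> v_orbit.
exists (flatten [seq [seq commute_xp gamma q p J | J <- enum {ffun option 'I_n -> 'I_N}]
                | p <- enum v]) => u.
rewrite /vass_elem !coef_flatten !big_map big_flatten /= big_map.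
under [RHS]eq_bigr => p _ do rewrite big_map sum_coef_commute_xp.
rewrite big_split /= sumrB !big_enum /= sum_merge_xp_porbit // subrK.
by apply: eq_bigr => p _; rewrite /wgl_diff coef_cat coef_scale_comb mulN1r.
Qed.
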